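(* Let $m>0$ and $\lambda<0$. Let $v_\lambda$ be the solution on $[m/2,\infty)$ of $$v''(r)+v(r)\Big(\frac{1}{4r^2}+\frac{m}{r^3}\Big(1+\frac{m}{2r}\Big)^{-2}+\lambda\Big(1+\frac{m}{2r}\Big)^4\Big)=0,\qquad v(m/2)=1,\ v'(m/2)=m^{-1}.$$ Then $v_\lambda$ has at most one zero in $[m/2,\infty)$. Equivalently, the solution $\gamma_\lambda=v_\lambda'/v_\lambda$ of the Riccati equation $$\gamma'+\gamma^2=-\frac{1}{4r^2}-\frac{m}{r^3}\Big(1+\frac{m}{2r}\Big)^{-2}-\lambda\Big(1+\frac{m}{2r}\Big)^4,\qquad \gamma(m/2)=m^{-1},$$ has at most one singularity (a point where it passes from $-\infty$ to $+\infty$). *)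

From Stdlib Require Import Reals.
Open Scope R_scope.

Definition potential (m lam r : R) : R :=
  / (4 * r ^ 2) + m / r ^ 3 * / (1 + m / (2 * r)) ^ 2 + lam * (1 + m / (2 * r)) ^ 4.

(* The proof is a Sturm comparison with the zero-energy equation (lam = 0),
   which has the explicit solution w0 r = sqrt r (1 - h r / 2), where
   h r = ln (2r/m) (2r - m)/(2r + m) increases strictly from h (m/2) = 0; hence
   w0 has a single sign change on [m/2, oo[.  The Wronskian
   W = w0 v' - w0' v vanishes at m/2 (same initial data up to a factor) and
   satisfies W' = - lam * (1 + m/(2r))^4 * w0 * v, so W strictly increases on
   any interval where w0 and v have the same strict sign.  Comparing the signs
   of W at the ends of such intervals shows that w0 changes sign before the
   first zero a of v, and then that v has no zero after a.  Simplicity of the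
   zeros of v (needed to start the second interval) follows from an energy
   estimate for v'' = - V v with V bounded. *)
From Stdlib Require Import Reals Lra.
From Coquelicot Require Import Coquelicot.
Open Scope R_scope.

Lemma pos_near (f : R -> R) (c : R) :
  continuity_pt f c -> 0 < f c ->
  exists e, 0 < e /\ forall x, Rabs (x - c) < e -> 0 < f x.
Proof.
  intros Hcont Hc.
  destruct (Hcont (f c / 2)) as [al [Hal Hx]]; [lra|].
  exists al; split; [exact Hal|]. intros x Hxc.
  destruct (Req_dec x c) as [->|Hne]; [exact Hc|].
  assert (Hclose : Rabs (f x - f c) < f c / 2).
  { apply Hx. split; [split; [exact I | auto] | exact Hxc]. }
  apply Rabs_def2 in Hclose. lra.
Qed.

Lemma increase_of_pos_deriv (f f' : R -> R) (p q : R) :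
  p < q -> (forall c, p <= c <= q -> derivable_pt_lim f c (f' c)) ->
  (forall c, p < c < q -> 0 < f' c) -> f p < f q.
Proof.
  intros Hpq Hd Hpos.
  destruct (MVT_cor2 f f' p q Hpq Hd) as [c [Hmvt Hc]].
  specialize (Hpos c Hc). nra.
Qed.

Lemma nondecrease_of_nonneg_deriv (f f' : R -> R) (p q : R) :
  p <= q -> (forall c, p <= c <= q -> derivable_pt_lim f c (f' c)) ->
  (forall c, p < c < q -> 0 <= f' c) -> f p <= f q.
Proof.
  intros Hpq0 Hd Hnn. destruct Hpq0 as [Hpq | Heq]; [|subst; lra].
  destruct (MVT_cor2 f f' p q Hpq Hd) as [c [Hmvt Hc]].
  specialize (Hnn c Hc). nra.
Qed.

(* First zero: if f is continuous on [a,b], positive just to the right of a and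
   f b <= 0, then f has a first zero c in ]a,b], i.e. f > 0 on ]a,c[.
   The zero is the supremum of the points up to which f stays positive. *)
Lemma first_zero (f : R -> R) (a b : R) :
  a < b -> (forall x, a <= x <= b -> continuity_pt f x) ->
  (exists d, 0 < d /\ forall x, a < x < a + d -> 0 < f x) -> f b <= 0 ->
  exists c, a < c <= b /\ f c = 0 /\ forall x, a < x < c -> 0 < f x.
Proof.
  intros Hab Hcont [d [Hd Hpos]] Hb.
  set (E := fun x => a <= x <= b /\ forall y, a < y <= x -> 0 < f y).
  assert (HE : exists x, E x) by (exists a; split; [lra | intros; lra]).
  assert (HB : bound E) by (exists b; intros x [Hx _]; lra).
  destruct (completeness E HB HE) as [c [Hub Hlub]].
  assert (Hcb : c <= b) by (apply Hlub; intros x [Hx _]; lra).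
  assert (Hac : a < c).
  { set (d' := Rmin (d / 2) ((b - a) / 2)).
    assert (d' <= d / 2) by apply Rmin_l.
    assert (d' <= (b - a) / 2) by apply Rmin_r.
    assert (0 < d') by (apply Rmin_pos; lra).
    enough (a + d' <= c) by lra.
    apply Hub. split; [lra|]. intros y Hy. apply Hpos. lra. }
  assert (Hbelow : forall x, a < x < c -> 0 < f x).
  { intros x Hx. destruct (Rlt_or_le 0 (f x)) as [h|h]; [exact h|].
    enough (c <= x) by lra.
    apply Hlub. intros s [Hs1 Hs2].
    destruct (Rle_or_lt x s) as [h2|h2]; [|lra].
    specialize (Hs2 x ltac:(lra)). lra. }
  exists c. split; [lra|]. split; [|exact Hbelow].
  destruct (Rtotal_order (f c) 0) as [Hn|[Hz|Hp]]; [exfalso| exact Hz | exfalso].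
  - (* f < 0 near c contradicts positivity on the left of c *)
    assert (Hc' : continuity_pt (fun x => - f x) c)
      by (apply continuity_pt_opp; apply Hcont; lra).
    destruct (pos_near _ _ Hc') as [e [He Hx]]; [lra|].
    set (x := Rmax ((a + c) / 2) (c - e / 2)).
    assert ((a + c) / 2 <= x) by apply Rmax_l.
    assert (c - e / 2 <= x) by apply Rmax_r.
    assert (x < c) by (unfold x; apply Rmax_lub_lt; lra).
    assert (0 < f x) by (apply Hbelow; lra).
    assert (0 < - f x) by (apply Hx; rewrite Rabs_left; lra).
    lra.
  - (* f > 0 near c contradicts c being the supremum *)
    assert (Hcb' : c < b) by (destruct Hcb as [h|h]; [exact h | subst c; lra]).
    destruct (pos_near _ _ (Hcont c ltac:(lra)) Hp) as [e [He Hx]].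
    set (x := c + Rmin (e / 2) (b - c)).
    assert (Rmin (e / 2) (b - c) <= e / 2) by apply Rmin_l.
    assert (Rmin (e / 2) (b - c) <= b - c) by apply Rmin_r.
    assert (0 < Rmin (e / 2) (b - c)) by (apply Rmin_pos; lra).
    assert (HEx : E x).
    { split; [unfold x; lra|]. intros y Hy.
      destruct (Rlt_or_le y c) as [h|h]; [apply Hbelow; lra|].
      apply Hx. unfold x in Hy. rewrite Rabs_right; lra. }
    specialize (Hub x HEx). unfold x in Hub. lra.
Qed.

Lemma deriv_nonpos_at_zero (f : R -> R) (a l : R) :
  derivable_pt_lim f a l -> f a = 0 ->
  (exists d, 0 < d /\ forall x, a - d < x < a -> 0 < f x) -> l <= 0.
Proof.
  intros Hd Ha [d [Hdpos Hx]].
  destruct (Rle_or_lt l 0) as [h|h]; [exact h|]. exfalso.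
  destruct (Hd (l / 2)) as [del Hdel]; [lra|].
  pose proof (cond_pos del) as Hdel0.
  set (t := Rmin (del / 2) (d / 2)).
  assert (t <= del / 2) by apply Rmin_l.
  assert (t <= d / 2) by apply Rmin_r.
  assert (0 < t) by (apply Rmin_pos; lra).
  assert (Hq := Hdel (- t) ltac:(lra) ltac:(rewrite Rabs_left; lra)).
  rewrite Ha, Rminus_0_r in Hq. apply Rabs_def2 in Hq.
  assert (Hf : 0 < f (a + - t)) by (apply Hx; lra).
  assert (f (a + - t) / - t < 0)
    by (apply Rmult_pos_neg; [lra | apply Rinv_lt_0_compat; lra]).
  lra.
Qed.

Lemma neg_after_zero (f : R -> R) (a l : R) :
  derivable_pt_lim f a l -> f a = 0 -> l < 0 ->
  exists d, 0 < d /\ forall x, a < x < a + d -> f x < 0.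
Proof.
  intros Hd Ha Hl. destruct (Hd (- l / 2)) as [del Hdel]; [lra|].
  exists del. split; [apply cond_pos|]. intros x Hx.
  assert (Hq := Hdel (x - a) ltac:(lra) ltac:(rewrite Rabs_right; lra)).
  replace (a + (x - a)) with x in Hq by ring.
  rewrite Ha, Rminus_0_r in Hq. apply Rabs_def2 in Hq.
  destruct (Rlt_or_le (f x) 0) as [h|h]; [exact h|]. exfalso.
  assert (0 <= f x / (x - a))
    by (apply Rmult_le_pos; [exact h | left; apply Rinv_0_lt_compat; lra]).
  lra.
Qed.

(* Energy estimate for v'' = - V v with |1 - V| <= K on [p,a]: the quantity
   (v^2 + v'^2) e^{K r} is nondecreasing, so a solution with nonzero Cauchy data
   at p cannot have a double zero (v = v' = 0) at a. *)
Lemma energy_positive (p a K : R) (v v' v'' V : R -> R) :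
  p <= a ->
  (forall r, p <= r <= a -> derivable_pt_lim v r (v' r)) ->
  (forall r, p <= r <= a -> derivable_pt_lim v' r (v'' r)) ->
  (forall r, p <= r <= a -> v'' r = - V r * v r) ->
  (forall r, p <= r <= a -> - K <= 1 - V r <= K) ->
  0 < v p * v p + v' p * v' p -> 0 < v a * v a + v' a * v' a.
Proof.
  intros Hpa Hv Hv' Hode HK Hp.
  set (G := fun r => (v r * v r + v' r * v' r) * exp (K * r)).
  set (G' := fun r => exp (K * r) *
               (2 * v r * v' r * (1 - V r) + K * (v r * v r + v' r * v' r))).
  assert (HG : forall c, p <= c <= a -> derivable_pt_lim G c (G' c)).
  { intros c hc.
    assert (Hexp : derivable_pt_lim (fun r => exp (K * r)) c (K * exp (K * c)))
      by (apply is_derive_Reals; auto_derive; [exact I | ring]).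
    replace (G' c) with
      ((v' c * v c + v c * v' c + (v'' c * v' c + v' c * v'' c)) * exp (K * c)
       + (v c * v c + v' c * v' c) * (K * exp (K * c))).
    - apply (derivable_pt_lim_mult (fun r => v r * v r + v' r * v' r)
               (fun r => exp (K * r))); [|exact Hexp].
      apply derivable_pt_lim_plus; apply derivable_pt_lim_mult; auto.
    - unfold G'. rewrite (Hode c hc). ring. }
  assert (HG' : forall c, p < c < a -> 0 <= G' c).
  { intros c hc. destruct (HK c ltac:(lra)) as [Hlo Hhi].
    assert (0 <= (K + (1 - V c)) * ((v c + v' c) * (v c + v' c)))
      by (apply Rmult_le_pos; [lra | apply Rle_0_sqr]).
    assert (0 <= (K - (1 - V c)) * ((v c - v' c) * (v c - v' c)))
      by (apply Rmult_le_pos; [lra | apply Rle_0_sqr]).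
    apply Rmult_le_pos; [left; apply exp_pos | nra]. }
  pose proof (nondecrease_of_nonneg_deriv G G' p a Hpa HG HG') as Hmono.
  unfold G in Hmono. pose proof (exp_pos (K * p)). pose proof (exp_pos (K * a)).
  nra.
Qed.

Section ZeroEnergySolution.

Variable m : R.
Hypothesis hm : 0 < m.

Definition h (r : R) : R := ln (2 * r / m) * ((2 * r - m) / (2 * r + m)).

Definition w0 (r : R) : R := sqrt r * (1 - h r / 2).

Definition w0' (r : R) : R :=
  (1 - h r / 2) / (2 * sqrt r)
  - sqrt r * ((2 * r - m) / (2 * r + m) / r + 4 * m * ln (2 * r / m) / (2 * r + m) ^ 2) / 2.

(* Clears the rational identities produced by auto_derive: writing r = s^2
   with s = sqrt r > 0 turns them into identities of rational functions. *)
Local Ltac field_sqrt r :=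
  unfold Rdiv;
  let L := fresh "L" in set (L := ln (2 * r * / m));
  let s := fresh "s" in
  assert (Hs : 0 < sqrt r) by (apply sqrt_lt_R0; lra);
  assert (Hr : r = sqrt r * sqrt r) by (rewrite sqrt_sqrt; lra);
  set (s := sqrt r) in *; clearbody s L; subst r;
  field; repeat split; nra.

Lemma w0_deriv (r : R) : 0 < r -> derivable_pt_lim w0 r (w0' r).
Proof.
  intros hr. apply is_derive_Reals. unfold w0, w0', h. auto_derive.
  - repeat split; try apply Rmult_lt_0_compat; try apply Rinv_0_lt_compat; lra.
  - field_sqrt r.
Qed.

Lemma w0'_deriv (r : R) : 0 < r -> derivable_pt_lim w0' r (- potential m 0 r * w0 r).
Proof.
  intros hr. apply is_derive_Reals. unfold w0, w0', h, potential. auto_derive.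
  - assert (0 < sqrt r) by (apply sqrt_lt_R0; lra).
    repeat split; try apply Rmult_lt_0_compat; try apply Rinv_0_lt_compat; nra.
  - field_sqrt r.
Qed.

(* h vanishes at m/2 and is strictly increasing on [m/2, oo[, as the product of
   two nonnegative increasing factors; hence w0 has exactly one zero there. *)
Lemma h_increasing (x y : R) : m / 2 <= x -> x < y -> h x < h y.
Proof.
  intros hx hxy. unfold h.
  assert (L0 : 0 <= ln (2 * x / m)).
  { rewrite <- ln_1. apply ln_le; [lra|].
    apply (Rmult_le_reg_r m); [lra|].
    unfold Rdiv; rewrite Rmult_assoc, Rinv_l; lra. }
  assert (L1 : ln (2 * x / m) < ln (2 * y / m)).
  { apply ln_increasing.
    - apply Rdiv_lt_0_compat; lra.
    - apply Rmult_lt_compat_r; [apply Rinv_0_lt_compat|]; lra. }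
  assert (T0 : 0 <= (2 * x - m) / (2 * x + m))
    by (apply Rmult_le_pos; [lra | left; apply Rinv_0_lt_compat; lra]).
  assert (T1 : (2 * x - m) / (2 * x + m) < (2 * y - m) / (2 * y + m)).
  { replace ((2 * x - m) / (2 * x + m)) with (1 - 2 * m * / (2 * x + m)) by (field; lra).
    replace ((2 * y - m) / (2 * y + m)) with (1 - 2 * m * / (2 * y + m)) by (field; lra).
    assert (/ (2 * y + m) < / (2 * x + m)) by (apply Rinv_lt_contravar; nra).
    nra. }
  nra.
Qed.

Lemma w0_pos (r : R) : 0 < r -> h r < 2 -> 0 < w0 r.
Proof.
  intros hr hh. apply Rmult_lt_0_compat; [apply sqrt_lt_R0|]; lra.
Qed.

Lemma w0_neg (r : R) : 0 < r -> 2 < h r -> w0 r < 0.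
Proof.
  intros hr hh. pose proof (sqrt_lt_R0 r hr). unfold w0. nra.
Qed.

End ZeroEnergySolution.

Definition weight (m r : R) : R := (1 + m / (2 * r)) ^ 4.

Lemma potential_shift (m lam r : R) :
  potential m lam r = potential m 0 r + lam * weight m r.
Proof. unfold potential, weight. ring. Qed.

Lemma weight_pos (m r : R) : 0 < m -> 0 < r -> 0 < weight m r.
Proof.
  intros hm hr. apply pow_lt.
  assert (0 < m / (2 * r)) by (apply Rdiv_lt_0_compat; lra). lra.
Qed.

(* On [m/2, oo[ the potential is bounded: with p = m/(2r) in ]0,1] it equals
   (p^2 + 8 p^3/(1+p)^2)/m^2 + lam (1+p)^4. *)
Lemma potential_bounds (m lam r : R) : 0 < m -> lam < 0 -> m / 2 <= r ->
  16 * lam <= potential m lam r <= 9 / m ^ 2.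
Proof.
  intros hm hl hr.
  set (p := m / (2 * r)).
  assert (hp0 : 0 < p) by (apply Rdiv_lt_0_compat; lra).
  assert (hp1 : p <= 1).
  { unfold p. apply (Rmult_le_reg_r (2 * r)); [lra|].
    unfold Rdiv; rewrite Rmult_assoc, Rinv_l; lra. }
  assert (E : potential m lam r = (p ^ 2 + 8 * p ^ 3 / (1 + p) ^ 2) / m ^ 2 + lam * (1 + p) ^ 4).
  { unfold potential, p. field. split; [|lra].
    assert (0 < m / (2 * r)) by (apply Rdiv_lt_0_compat; lra). lra. }
  rewrite E.
  assert (A0 : 0 <= 8 * p ^ 3 / (1 + p) ^ 2)
    by (apply Rmult_le_pos; [nra | left; apply Rinv_0_lt_compat; nra]).
  assert (A1 : 8 * p ^ 3 / (1 + p) ^ 2 <= 8).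
  { apply (Rmult_le_reg_r ((1 + p) ^ 2)); [nra|].
    unfold Rdiv; rewrite Rmult_assoc, Rinv_l; nra. }
  assert (B0 : 0 < (1 + p) ^ 4) by (apply pow_lt; lra).
  assert (B1 : (1 + p) ^ 4 <= 16) by (replace 16 with (2 ^ 4) by ring; apply pow_incr; lra).
  assert (C : 0 <= (p ^ 2 + 8 * p ^ 3 / (1 + p) ^ 2) / m ^ 2)
    by (apply Rmult_le_pos; [nra | left; apply Rinv_0_lt_compat; nra]).
  assert (C2 : (p ^ 2 + 8 * p ^ 3 / (1 + p) ^ 2) / m ^ 2 <= 9 / m ^ 2)
    by (apply Rmult_le_compat_r; [left; apply Rinv_0_lt_compat; nra | nra]).
  split; nra.
Qed.

Section SturmComparison.

Variables (m lam : R) (v v' v'' : R -> R).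
Hypothesis hm : 0 < m.
Hypothesis hlam : lam < 0.
Hypothesis hv : forall r, m / 2 <= r -> derivable_pt_lim v r (v' r).
Hypothesis hv' : forall r, m / 2 <= r -> derivable_pt_lim v' r (v'' r).
Hypothesis hode : forall r, m / 2 <= r -> v'' r + v r * potential m lam r = 0.
Hypothesis hinit0 : v (m / 2) = 1.
Hypothesis hinit1 : v' (m / 2) = / m.

Definition wronskian (r : R) : R := w0 m r * v' r - w0' m r * v r.

(* Since the potentials differ by lam * weight, W' = - lam * weight * w0 * v. *)
Lemma wronskian_deriv (c : R) : m / 2 <= c ->
  derivable_pt_lim wronskian c (- lam * weight m c * w0 m c * v c).
Proof.
  intros hc. unfold wronskian.
  replace (- lam * weight m c * w0 m c * v c) with
    (w0' m c * v' c + w0 m c * v'' c - (- potential m 0 c * w0 m c * v c + w0' m c * v' c)).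
  - apply derivable_pt_lim_minus; apply derivable_pt_lim_mult; auto.
    + apply w0_deriv; lra.
    + apply w0'_deriv; lra.
  - pose proof (hode c hc). rewrite (potential_shift m lam c) in *. nra.
Qed.

(* The initial data of v are those of w0 up to the factor sqrt (m/2). *)
Lemma wronskian_init : wronskian (m / 2) = 0.
Proof.
  unfold wronskian, w0, w0', h. rewrite hinit0, hinit1.
  replace (2 * (m / 2) / m) with 1 by (field; lra). rewrite ln_1.
  replace (2 * (m / 2) - m) with 0 by field.
  assert (Hs : 0 < sqrt (m / 2)) by (apply sqrt_lt_R0; lra).
  assert (Hss : sqrt (m / 2) * sqrt (m / 2) = m / 2) by (rewrite sqrt_sqrt; lra).
  set (s := sqrt (m / 2)) in *. clearbody s.
  replace m with (2 * (s * s)) by lra. field. lra.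
Qed.

(* Zeros of v are simple: the energy estimate on [m/2, a], with the potential
   bounds, forbids v a = v' a = 0 since v (m/2) = 1. *)
Lemma zeros_simple (a : R) : m / 2 <= a -> v a = 0 -> v' a <> 0.
Proof.
  intros ha va va'.
  assert (Hm2 : 0 < 9 / m ^ 2) by (apply Rdiv_lt_0_compat; nra).
  assert (Henergy : 0 < v a * v a + v' a * v' a).
  { apply (energy_positive (m / 2) a (2 + 9 / m ^ 2 - 16 * lam) v v' v''
             (potential m lam)); auto.
    - intros r hr. apply hv; lra.
    - intros r hr. apply hv'; lra.
    - intros r hr. pose proof (hode r ltac:(lra)). lra.
    - intros r hr. pose proof (potential_bounds m lam r hm hlam ltac:(lra)). lra.
    - rewrite hinit0. nra. }
  rewrite va, va' in Henergy. lra.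
Qed.

(* Sturm comparison step: W cannot go from >= 0 to <= 0 on an interval where
   w0 and v have the same strict sign, because there W' > 0. *)
Lemma sturm_step (p q : R) : m / 2 <= p -> p < q ->
  (forall c, p < c < q -> 0 < w0 m c * v c) ->
  0 <= wronskian p -> wronskian q <= 0 -> False.
Proof.
  intros hp hpq hsign hWp hWq.
  enough (wronskian p < wronskian q) by lra.
  apply (increase_of_pos_deriv wronskian
           (fun c => - lam * weight m c * w0 m c * v c) p q hpq).
  - intros c hc. apply wronskian_deriv. lra.
  - intros c hc. pose proof (weight_pos m c hm ltac:(lra)).
    replace (- lam * weight m c * w0 m c * v c) with
      ((- lam) * weight m c * (w0 m c * v c)) by ring.
    apply Rmult_lt_0_compat; [nra | exact (hsign c hc)].
Qed.

Lemma first_zero_of_v (r : R) : m / 2 <= r -> v r = 0 ->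
  exists a, m / 2 < a <= r /\ v a = 0 /\ forall x, m / 2 <= x < a -> 0 < v x.
Proof.
  intros hr vr.
  assert (hr' : m / 2 < r) by (destruct hr as [h|h]; [exact h | subst r; lra]).
  destruct (first_zero v (m / 2) r hr') as [a [Ha [va Hpos]]].
  - intros x hx. apply derivable_continuous_pt. exists (v' x). apply hv. lra.
  - assert (Hc : continuity_pt v (m / 2)).
    { apply derivable_continuous_pt. exists (v' (m / 2)). apply hv. lra. }
    destruct (pos_near v (m / 2) Hc) as [e [He Hx]]; [lra|].
    exists e. split; [exact He|]. intros x hx. apply Hx. rewrite Rabs_right; lra.
  - lra.
  - exists a. split; [exact Ha|]. split; [exact va|].
    intros x [hx1 hx2]. destruct hx1 as [hx1|<-]; [apply Hpos; lra | lra].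
Qed.

Section FirstZero.

Variable a : R.
Hypothesis ha : m / 2 < a.
Hypothesis va : v a = 0.
Hypothesis hpos : forall x, m / 2 <= x < a -> 0 < v x.

Lemma first_zero_slope : v' a < 0.
Proof.
  assert (v' a <= 0).
  { apply (deriv_nonpos_at_zero v a); [apply hv; lra | exact va|].
    exists (a - m / 2). split; [lra|]. intros x hx. apply hpos. lra. }
  pose proof (zeros_simple a ltac:(lra) va). lra.
Qed.

(* w0 vanishes before the first zero of v: otherwise w0 > 0 and v > 0 on
   ]m/2, a[ while W (m/2) = 0 and W a = w0 a * v' a <= 0. *)
Lemma w0_zero_before : 2 < h m a.
Proof.
  destruct (Rlt_or_le 2 (h m a)) as [H|H]; [exact H | exfalso].
  apply (sturm_step (m / 2) a); [lra | exact ha | | rewrite wronskian_init; lra |].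
  - intros c hc. apply Rmult_lt_0_compat; [|apply hpos; lra].
    apply w0_pos; [lra|]. pose proof (h_increasing m hm c a ltac:(lra) ltac:(lra)). lra.
  - unfold wronskian. rewrite va.
    assert (0 <= w0 m a).
    { apply Rmult_le_pos; [apply sqrt_pos | lra]. }
    pose proof first_zero_slope. nra.
Qed.

(* v has no zero after its first one: at the next zero b, W a = w0 a * v' a > 0
   and W b = w0 b * v' b <= 0, while w0 < 0 and v < 0 on ]a, b[. *)
Lemma no_later_zero (r : R) : a < r -> v r <> 0.
Proof.
  intros hr vr.
  assert (hw0 : forall x, a <= x -> w0 m x < 0).
  { intros x hx. apply w0_neg; [lra|].
    destruct hx as [hx|<-]; [|exact w0_zero_before].
    pose proof (h_increasing m hm a x ltac:(lra) hx). pose proof w0_zero_before. lra. }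
  destruct (neg_after_zero v a (v' a) (hv a ltac:(lra)) va first_zero_slope)
    as [d [Hd Hneg]].
  destruct (first_zero (fun x => - v x) a r hr) as [b [Hb [vb Hnegb]]].
  - intros x hx. apply continuity_pt_opp. apply derivable_continuous_pt.
    exists (v' x). apply hv. lra.
  - exists d. split; [exact Hd|]. intros x hx. pose proof (Hneg x hx). lra.
  - lra.
  - assert (Hslope_b : - v' b <= 0).
    { apply (deriv_nonpos_at_zero (fun x => - v x) b).
      - apply derivable_pt_lim_opp. apply hv. lra.
      - exact vb.
      - exists (b - a). split; [lra|]. intros x hx. apply Hnegb. lra. }
    apply (sturm_step a b); [lra | lra | | |].
    + intros c hc. pose proof (hw0 c ltac:(lra)). pose proof (Hnegb c hc). nra.
    + unfold wronskian. rewrite va. pose proof (hw0 a ltac:(lra)).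
      pose proof first_zero_slope. nra.
    + unfold wronskian. replace (v b) with 0 by lra.
      pose proof (hw0 b ltac:(lra)). nra.
Qed.

End FirstZero.

End SturmComparison.

Theorem mainTheorem8 (m lam : R) (v v' v'' : R -> R)
  (hm : 0 < m) (hlam : lam < 0)
  (hv : forall r, m / 2 <= r -> derivable_pt_lim v r (v' r))
  (hv' : forall r, m / 2 <= r -> derivable_pt_lim v' r (v'' r))
  (hode : forall r, m / 2 <= r -> v'' r + v r * potential m lam r = 0)
  (hinit0 : v (m / 2) = 1)
  (hinit1 : v' (m / 2) = / m) :
  forall r1 r2, m / 2 <= r1 -> m / 2 <= r2 -> v r1 = 0 -> v r2 = 0 -> r1 = r2.
Proof.
  (* Two zeros x < y are impossible: y lies after the first zero of v. *)
  assert (Hordered : forall x y, m / 2 <= x -> x < y -> v x = 0 -> v y = 0 -> False).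
  { intros x y hx hxy vx vy.
    destruct (first_zero_of_v m v v' hv hinit0 x hx vx) as [a [Ha [va Hpos]]].
    exact (no_later_zero m lam v v' v'' hm hlam hv hv' hode hinit0 hinit1
             a (proj1 Ha) va Hpos y ltac:(lra) vy). }
  intros r1 r2 h1 h2 z1 z2.
  destruct (Rtotal_order r1 r2) as [h|[h|h]]; [exfalso | exact h | exfalso].
  - exact (Hordered r1 r2 h1 h z1 z2).
  - exact (Hordered r2 r1 h2 h z2 z1).
Qed.
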